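(* Let $\mathcal{Z}=\{(S_q,\gamma_q)\}_{q\in[Q]}$ be a buyer-optimal signaling scheme for $\mathcal{D}$, and let $p$ be a price maximizing $p\cdot G_{\mathcal{D}}(p)$. Then for every $q$ with $\gamma_q>0$, the price $p$ also maximizes $p'\cdot G_{S_q}(p')$ over $p'\ge 0$.
   Context: Values and prior. $0<v_1<\dots<v_n$ are reals, and $\mathcal{D}$ is a distribution on $\{v_1,\dots,v_n\}$ with $f_{\mathcal{D}}(v_i)>0$. For a distribution $S$, $G_S(p)=\Pr_{v\sim S}[v\ge p]$. Signals and pricing. A signal is a distribution $S$ on these values. The seller posts $p^*_S$, the smallest $v$ in the support of $S$ maximizing $v\,G_S(v)$. The surplus of value $v$ is $cs_v(S)=\mathbb{1}[v\ge p^*_S](v-p^*_S)$. Signaling schemes. A signaling scheme is $\mathcal{Z}=\{(S_q,\gamma_q)\}$ with $\gamma_q\ge0$, $\sum\gamma_q=1$ and $\sum_q\gamma_q f_{S_q}=f_{\mathcal{D}}$. Its expected consumer surplus at $v_i$ is $cs_{v_i}(\mathcal{Z})=\sum_q cs_{v_i}(S_q)\gamma_q f_{S_q}(v_i)/f_{\mathcal{D}}(v_i)$. $\mathcal{Z}$ is buyer-optimal if \[\sum_i f_{\mathcal{D}}(v_i)\,cs_{v_i}(\mathcal{Z})=\sum_i f_{\mathcal{D}}(v_i)\,v_i-\max_p p\,G_{\mathcal{D}}(p).\] *)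

From mathcomp Require Import all_boot all_order all_algebra.
Set Implicit Arguments. Unset Strict Implicit. Unset Printing Implicit Defensive.
Import Order.TTheory GRing.Theory Num.Theory.
Local Open Scope ring_scope.

Section Defs.
Variables (R : realFieldType) (n : nat) (v : 'I_n -> R).

Definition valid_values : Prop :=
  (forall i, 0 < v i) /\ (forall i j : 'I_n, (i < j)%N -> v i < v j).

(* a (probability) distribution on {v_1,...,v_n}, given by its pmf f_S(v_i) = S i *)
Definition is_dist (S : 'I_n -> R) : Prop :=
  (forall i, 0 <= S i) /\ \sum_i S i = 1.

Definition G (S : 'I_n -> R) (p : R) : R := \sum_(i | p <= v i) S i.

Definition opt_price (S : 'I_n -> R) (p : R) : Prop :=
  0 <= p /\ forall p', 0 <= p' -> p' * G S p' <= p * G S p.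

Definition supp_maxrev (S : 'I_n -> R) : R :=
  \big[Num.max/0]_(j | 0 < S j) (v j * G S (v j)).

(* p*_S : the smallest v in the support of S maximizing v G_S(v).
   (The default value max_j v_j only matters if there is no candidate,
   which never happens for a distribution.) *)
Definition max_value : R := \big[Num.max/0]_j v j.

Definition seller_price (S : 'I_n -> R) : R :=
  \big[Num.min/max_value]_(j | (0 < S j) && (v j * G S (v j) == supp_maxrev S)) v j.

Definition cs (S : 'I_n -> R) (x : R) : R :=
  if seller_price S <= x then x - seller_price S else 0.

Definition is_scheme (Q : nat) (D : 'I_n -> R) (S : 'I_Q -> 'I_n -> R)
  (gamma : 'I_Q -> R) : Prop :=
  (forall q, 0 <= gamma q) /\ \sum_q gamma q = 1 /\
  (forall q, is_dist (S q)) /\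
  (forall i, \sum_q gamma q * S q i = D i).

Definition cs_scheme (Q : nat) (D : 'I_n -> R) (S : 'I_Q -> 'I_n -> R)
  (gamma : 'I_Q -> R) (i : 'I_n) : R :=
  \sum_q cs (S q) (v i) * gamma q * S q i / D i.

Definition buyer_optimal (Q : nat) (D : 'I_n -> R) (S : 'I_Q -> 'I_n -> R)
  (gamma : 'I_Q -> R) : Prop :=
  exists p0, opt_price D p0 /\
    \sum_i D i * cs_scheme D S gamma i = \sum_i D i * v i - p0 * G D p0.

End Defs.

(* Whatever signal the seller sees, his revenue is at least what the uniform
   price p earns on it, and the buyer's surplus plus the seller's revenue never
   exceeds the expected value.  Averaging over the signals, buyer optimality
   therefore forces the average revenue down to the monopoly revenue p G_D(p),
   which is also the average of the revenues p G_(S_q)(p).  So the nonnegative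
   gaps between the two revenues average to zero, and every signal sent with
   positive probability has p among its optimal prices. *)
From mathcomp Require Import all_boot all_order all_algebra.
From mathcomp Require Import ring lra.
Import Order.TTheory GRing.Theory Num.Theory.
Local Open Scope ring_scope.
Set Implicit Arguments. Unset Strict Implicit.

Definition seller_revenue (R : realFieldType) (n : nat) (v S : 'I_n -> R) : R :=
  seller_price v S * G v S (seller_price v S).

Section SellerRevenue.
Variables (R : realFieldType) (n : nat) (v : 'I_n -> R) (S : 'I_n -> R).
Hypothesis S_ge0 : forall i, 0 <= S i.

Lemma G_ge0 x : 0 <= G v S x.
Proof. exact: sumr_ge0. Qed.

Lemma G_le_next_atom x y :
  (forall i, 0 < S i -> x <= v i -> y <= v i) -> G v S x <= G v S y.
Proof.
move=> xy; rewrite /G big_mkcond [leRHS]big_mkcond /=.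
apply: ler_sum => i _; case: ifPn => vx; case: ifPn => vy //.
by rewrite leNgt; apply: contra vy => Si; exact: xy Si vx.
Qed.

Lemma G_eq0_above_atoms x : (forall i, 0 < S i -> v i < x) -> G v S x = 0.
Proof.
move=> below; apply: big1 => i xi; apply/eqP; rewrite eq_le S_ge0 andbT.
by rewrite leNgt; apply: contraL xi => /below; rewrite -ltNge.
Qed.

Hypothesis v_gt0 : forall i, 0 < v i.

(* A price strictly between two atoms loses to the next atom above it, which
   sells with the same probability at a higher price. *)
Lemma revenue_le_supp_maxrev x : 0 <= x -> x * G v S x <= supp_maxrev v S.
Proof.
move=> x_ge0; pose above i := (0 < S i) && (x <= v i).
have [j0 above_j0 | no_atom] := pickP above; last first.
  rewrite G_eq0_above_atoms ?mulr0 ?bigmax_ge_id // => i Si.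
  by rewrite ltNge; apply: contraFN (no_atom i) => xi; rewrite /above Si.
case: (arg_minP v above_j0) => j /andP[Sj xj] jmin.
apply: le_trans (le_bigmax_cond _ _ Sj).
apply: ler_pM => //; first exact: G_ge0.
by apply: G_le_next_atom => i Si xi; apply: jmin; rewrite /above Si.
Qed.

Lemma supp_maxrev_attained : is_dist S ->
  exists2 k, 0 < S k & v k * G v S (v k) = supp_maxrev v S.
Proof.
case=> _ S_sum1.
have [j0 Sj0] : exists j, 0 < S j.
  apply/existsP; apply: contraT; rewrite negb_exists => /forallP none.
  suff : \sum_i S i = 0 by rewrite S_sum1 => /eqP; rewrite oner_eq0.
  by apply: big1 => i _; apply/eqP; rewrite eq_le S_ge0 andbT leNgt none.
rewrite /supp_maxrev.
have [k Sk ->] := eq_bigmax _ (fun j => 0 < S j) (fun j => v j * G v S (v j))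
  Sj0 (fun i _ => mulr_ge0 (ltW (v_gt0 i)) (G_ge0 _)).
by exists k.
Qed.

Lemma seller_price_opt : is_dist S -> opt_price v S (seller_price v S).
Proof.
move=> S_dist; have [k Sk revk] := supp_maxrev_attained S_dist.
have v_le_max i : v i <= max_value v := le_bigmax _ _ i.
rewrite /seller_price; have [c /andP[_ /eqP revc] ->] :=
  eq_bigmin _ (fun j => (0 < S j) && (v j * G v S (v j) == supp_maxrev v S)) v
    (introT andP (conj Sk (introT eqP revk))) (fun i _ => v_le_max i).
split=> [|x x_ge0]; first exact: ltW.
by rewrite revc; exact: revenue_le_supp_maxrev.
Qed.

Lemma surplus_add_revenue_le :
  \sum_i S i * cs v S (v i) + seller_revenue v S <= \sum_i S i * v i.
Proof.
rewrite /seller_revenue /G mulr_sumr [X in _ + X]big_mkcond -big_split /=.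
apply: ler_sum => i _; rewrite /cs; case: ifP => _.
  by rewrite [_ * S i]mulrC -mulrDr subrK.
by rewrite mulr0 add0r mulr_ge0 // ltW.
Qed.

End SellerRevenue.

Lemma opt_price_revenue_eq (R : realFieldType) (n : nat) (v S : 'I_n -> R)
    p p' :
  opt_price v S p -> opt_price v S p' -> p * G v S p = p' * G v S p'.
Proof. by move=> [p0 popt] [p'0 p'opt]; apply/le_anti; rewrite popt ?p'opt. Qed.

Section Scheme.
Variables (R : realFieldType) (n Q : nat) (v D : 'I_n -> R).
Variables (S : 'I_Q -> 'I_n -> R) (gamma : 'I_Q -> R).
Hypothesis mix : forall i, \sum_q gamma q * S q i = D i.

Lemma sum_mix (P : pred 'I_n) (f : 'I_n -> R) :
  \sum_(i | P i) D i * f i = \sum_q gamma q * \sum_(i | P i) S q i * f i.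
Proof.
under eq_bigr do rewrite -mix mulr_suml.
rewrite exchange_big; apply: eq_bigr => q _; rewrite mulr_sumr.
by apply: eq_bigr => i _; rewrite mulrA.
Qed.

Lemma G_mix x : G v D x = \sum_q gamma q * G v (S q) x.
Proof.
have := sum_mix (fun i => x <= v i) (fun=> 1).
under eq_bigr do rewrite mulr1.
by under [in RHS]eq_bigr do under eq_bigr do rewrite mulr1.
Qed.

Lemma cs_scheme_mix : (forall i, D i != 0) ->
  \sum_i D i * cs_scheme v D S gamma i
    = \sum_q gamma q * \sum_i S q i * cs v (S q) (v i).
Proof.
move=> D_neq0; under eq_bigr do rewrite /cs_scheme mulr_sumr.
rewrite exchange_big; apply: eq_bigr => q _; rewrite mulr_sumr.
by apply: eq_bigr => i _; field; exact: D_neq0.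
Qed.

Hypotheses (gamma_ge0 : forall q, 0 <= gamma q).
Hypotheses (S_ge0 : forall q i, 0 <= S q i) (v_gt0 : forall i, 0 < v i).
Hypothesis D_neq0 : forall i, D i != 0.

Lemma buyer_optimal_revenue_le p :
  buyer_optimal v D S gamma -> opt_price v D p ->
  \sum_q gamma q * seller_revenue v (S q) <= p * G v D p.
Proof.
move=> [p0 [p0_opt surplus]] p_opt.
have welfare :
    \sum_q gamma q * (\sum_i S q i * cs v (S q) (v i) + seller_revenue v (S q))
    <= \sum_q gamma q * \sum_i S q i * v i.
  apply: ler_sum => q _; apply: ler_wpM2l => //.
  exact: surplus_add_revenue_le.
move: welfare; rewrite -sum_mix (opt_price_revenue_eq p_opt p0_opt).
under eq_bigr do rewrite mulrDr.
by rewrite big_split /= -cs_scheme_mix // surplus; lra.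
Qed.

End Scheme.

Lemma eq_of_weighted_sum_le (R : realFieldType) (I : finType) (w a b : I -> R) :
  (forall i, 0 <= w i) -> (forall i, a i <= b i) ->
  \sum_i w i * b i <= \sum_i w i * a i -> forall i, 0 < w i -> b i = a i.
Proof.
move=> w_ge0 ab sum_le i wi.
have gap_ge0 j : true -> 0 <= w j * (b j - a j) by rewrite mulr_ge0 ?subr_ge0.
have gap_sum0 : \sum_j w j * (b j - a j) = 0.
  apply/le_anti; rewrite sumr_ge0 // andbT.
  by under eq_bigr do rewrite mulrBr; rewrite sumrB subr_le0.
move/eqP: (psumr_eq0P gap_ge0 gap_sum0 (i := i) isT).
by rewrite mulf_eq0 gt_eqF //= subr_eq0 => /eqP.
Qed.

Theorem lemma8 (R : realFieldType) (n : nat) (v : 'I_n -> R) (D : 'I_n -> R)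
  (Q : nat) (S : 'I_Q -> 'I_n -> R) (gamma : 'I_Q -> R) (p : R) :
  valid_values v ->
  is_dist D -> (forall i, 0 < D i) ->
  is_scheme D S gamma ->
  buyer_optimal v D S gamma ->
  opt_price v D p ->
  forall q, 0 < gamma q -> opt_price v (S q) p.
Proof.
move=> [v_gt0 _] _ D_gt0 [gamma_ge0 [_ [S_dist mix]]] opt p_opt q gamma_q.
have S_ge0 q' : forall i, 0 <= S q' i := (S_dist q').1.
have seller_opt q' := seller_price_opt (S_ge0 q') v_gt0 (S_dist q').
have rev_ge q' : p * G v (S q') p <= seller_revenue v (S q').
  exact: (seller_opt q').2 p p_opt.1.
have avg_rev_le : \sum_q gamma q * seller_revenue v (S q)
    <= \sum_q gamma q * (p * G v (S q) p).
  under [leRHS]eq_bigr do rewrite mulrCA; rewrite -mulr_sumr -(G_mix _ mix).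
  by apply: buyer_optimal_revenue_le opt p_opt => // i; rewrite lt0r_neq0.
have rev_q := eq_of_weighted_sum_le gamma_ge0 rev_ge avg_rev_le gamma_q.
split=> [|x x_ge0]; first exact: p_opt.1.
by rewrite -rev_q; exact: (seller_opt q).2.
Qed.
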